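(* For $n\ge1$, $\left|\Pi_n\wr C_2(1^11^2,1^21^1)\right|=\sum_{k=0}^n 2^k \begin{Bmatrix} n\\ k\end{Bmatrix}$, where $\begin{Bmatrix} n\\ k\end{Bmatrix}$ is a Stirling number of the second kind.
   Context: For $n\ge0$ let $[n]=\{1,\dots,n\}$. A $2$-colored set partition of $[n]$ is a set partition of $[n]$ together with an assignment of a color from $\{1,2\}$ to each element; $\Pi_n\wr C_2$ is the set of these. For a set $S$ of patterns, $\Pi_n\wr C_2(S)$ is the set of such colored partitions avoiding every pattern in $S$ in the pattern sense. For the patterns used here: $\sigma$ contains $1^11^2$ iff there are $i<j$ in the same block with $i$ colored $1$ and $j$ colored $2$; $\sigma$ contains $1^21^1$ iff there are $i<j$ in the same block with $i$ colored $2$ and $j$ colored $1$. *)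

From mathcomp Require Import all_boot.
Set Implicit Arguments. Unset Strict Implicit. Unset Printing Implicit Defensive.

(* The ground set [n] = {1,...,n} is modelled by 'I_n = {0,...,n-1}
   (shift by one; the order is preserved). *)

Definition color1 : 'I_2 := ord0.
Definition color2 : 'I_2 := ord_max.

Definition colored_partition (n : nat) :=
  ({set {set 'I_n}} * {ffun 'I_n -> 'I_2})%type.

Definition is_colored_partition n (s : colored_partition n) : bool :=
  partition s.1 [set: 'I_n].

Definition same_block n (P : {set {set 'I_n}}) (i j : 'I_n) : bool :=
  [exists B in P, (i \in B) && (j \in B)].

Definition contains_11_12 n (s : colored_partition n) : bool :=
  [exists i : 'I_n, exists j : 'I_n,
     [&& i < j, same_block s.1 i j, s.2 i == color1 & s.2 j == color2]].

Definition contains_12_11 n (s : colored_partition n) : bool :=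
  [exists i : 'I_n, exists j : 'I_n,
     [&& i < j, same_block s.1 i j, s.2 i == color2 & s.2 j == color1]].

Definition avoiders (n : nat) : {set colored_partition n} :=
  [set s : colored_partition n | [&& is_colored_partition s,
                                    ~~ contains_11_12 s & ~~ contains_12_11 s]].

Fixpoint stirling2 (n k : nat) : nat :=
  match n, k with
  | 0, 0 => 1
  | 0, _.+1 => 0
  | _.+1, 0 => 0
  | n'.+1, k'.+1 => k'.+1 * stirling2 n' k'.+1 + stirling2 n' k'
  end.

From mathcomp Require Import all_boot zify.
Set Implicit Arguments. Unset Strict Implicit. Unset Printing Implicit Defensive.

(* A colored partition avoids both 1^1 1^2 and 1^2 1^1 exactly when each of
   its blocks is monochromatic, so the avoiders with k blocks are the set
   partitions with k blocks together with a coloring of the blocks, and there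
   are 2^k S(n, k) of them.  We encode such a pair by the map sending each
   element to the least element (the root) of its block, plus the coloring.
   Deleting the largest element n shows that the number c(n, k) of these
   encodings with k roots satisfies c(n+1, k) = 2 c(n, k-1) + k c(n, k):
   the new element either opens a singleton block in one of two colors, or
   joins one of the k existing blocks, named by its root. *)

Definition cmap n := ({ffun 'I_n -> 'I_n} * {ffun 'I_n -> 'I_2})%type.

Definition is_cmap n (t : cmap n) : bool :=
  [forall i, [&& t.1 i <= i, t.1 (t.1 i) == t.1 i & t.2 i == t.2 (t.1 i)]].

Definition nroots n (r : {ffun 'I_n -> 'I_n}) := #|[set i | r i == i]|.

Definition cmaps n k := [set t : cmap n | is_cmap t && (nroots t.1 == k)].

Lemma is_cmapP n (t : cmap n) :
  reflect (forall i, [/\ t.1 i <= i, t.1 (t.1 i) = t.1 i & t.2 i = t.2 (t.1 i)])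
          (is_cmap t).
Proof.
apply: (iffP forallP) => H i; first by case/and3P: (H i) => ? /eqP ? /eqP.
by case: (H i) => -> -> ->; rewrite !eqxx.
Qed.

Lemma cmap_eq n (t u : cmap n) :
  t.1 =1 u.1 -> t.2 =1 u.2 -> t = u.
Proof. by case: t u => r c [r' c'] /= /ffunP-> /ffunP->. Qed.

Lemma sum_nat_bool (T : finType) (P b : pred T) :
  \sum_(i | P i) (b i : nat) = #|[set i | P i && b i]|.
Proof. by rewrite -sum1dep_card big_mkcondr; apply: eq_bigr => i _; case: (b i). Qed.

Lemma sum_nat_eq_lt (m N : nat) : \sum_(0 <= k < N) (m == k : nat) = (m < N).
Proof.
elim: N => [|N IH]; first by rewrite big_geq.
by rewrite big_nat_recr //= IH ltnS; case: ltngtP.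
Qed.

Section RemoveLast.

Variable n : nat.

Local Notation up := (lift ord_max).

Lemma val_up (i : 'I_n) : val (up i) = val i.
Proof. exact: lift_max. Qed.

Lemma card_set_ord_recr (P : pred 'I_n.+1) :
  #|[set i | P i]| = #|[set j : 'I_n | P (up j)]| + P ord_max.
Proof.
rewrite -!sum1dep_card big_mkcond big_ord_recr [in RHS]big_mkcond /=.
have widen_up (j : 'I_n) : widen_ord (leqnSn n) j = up j.
  by apply: val_inj; rewrite val_up.
by congr (_ + _); apply: eq_bigr => j _; rewrite widen_up.
Qed.

(* The default of [insubd] is never used on a [cmap], whose roots satisfy
   [t.1 i <= i]. *)
Definition restrict (t : cmap n.+1) : cmap n :=
  ([ffun i => insubd i (val (t.1 (up i)))], [ffun i => t.2 (up i)]).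

(* [inl c]: the last element opens a singleton block of color [c];
   [inr j]: it joins the block rooted at [j]. *)
Definition extend (t : cmap n) (x : 'I_2 + 'I_n) : cmap n.+1 :=
  ([ffun i : 'I_n.+1 => if unlift ord_max i is Some j then up (t.1 j)
     else if x is inr j then up j else ord_max],
   [ffun i : 'I_n.+1 => if unlift ord_max i is Some j then t.2 j
     else match x with inl c => c | inr j => t.2 j end]).

Definition admissible (t : cmap n) (x : 'I_2 + 'I_n) : bool :=
  if x is inr j then t.1 j == j else true.

Definition last_choice (t : cmap n.+1) : 'I_2 + 'I_n :=
  if unlift ord_max (t.1 ord_max) is Some j then inr j else inl (t.2 ord_max).

Lemma restrict1_up (t : cmap n.+1) i :
  is_cmap t -> up ((restrict t).1 i) = t.1 (up i).
Proof.
move/is_cmapP=> V; apply: val_inj; rewrite val_up /= ffunE val_insubd.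
by case: (V (up i)) => + _ _; rewrite val_up => le; rewrite (leq_ltn_trans le (ltn_ord i)).
Qed.

Lemma restrict2E (t : cmap n.+1) i : (restrict t).2 i = t.2 (up i).
Proof. by rewrite ffunE. Qed.

Lemma restrict_cmap (t : cmap n.+1) : is_cmap t -> is_cmap (restrict t).
Proof.
move=> Vt; have /is_cmapP V := Vt; apply/is_cmapP => i.
have R j : up ((restrict t).1 j) = t.1 (up j) := restrict1_up j Vt.
move: (V (up i)); rewrite -!R !val_up => -[le idem col].
by rewrite !restrict2E; split=> //; apply: lift_inj idem.
Qed.

Lemma nroots_restrict (t : cmap n.+1) : is_cmap t ->
  nroots t.1 = nroots (restrict t).1 + (t.1 ord_max == ord_max).
Proof.
move=> Vt; rewrite /nroots card_set_ord_recr; congr (_ + _).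
apply: eq_card => j.
by rewrite !inE -[(restrict t).1 j == j](inj_eq (@lift_inj _ ord_max)) restrict1_up.
Qed.

Lemma extend1_up t x j : (extend t x).1 (up j) = up (t.1 j).
Proof. by rewrite ffunE liftK. Qed.

Lemma extend2_up t x j : (extend t x).2 (up j) = t.2 j.
Proof. by rewrite ffunE liftK. Qed.

Lemma extend1_max t x :
  (extend t x).1 ord_max = if x is inr j then up j else ord_max.
Proof. by rewrite ffunE unlift_none. Qed.

Lemma extend2_max t x :
  (extend t x).2 ord_max = match x with inl c => c | inr j => t.2 j end.
Proof. by rewrite ffunE unlift_none. Qed.

Lemma extend_cmap t x : is_cmap t -> admissible t x -> is_cmap (extend t x).
Proof.
move=> /is_cmapP V adm; apply/is_cmapP => i.
case: (unliftP ord_max i) => [j ->|->].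
  by rewrite !extend1_up !extend2_up !val_up; case: (V j) => ? -> <-.
case: x adm => [c _|j /eqP root_j]; rewrite !extend1_max extend2_max //.
by rewrite extend1_up extend2_up root_j val_up /= ltnW.
Qed.

Lemma restrict_extend t x : restrict (extend t x) = t.
Proof.
apply: cmap_eq => i; rewrite ?restrict2E ?extend2_up //.
by apply: val_inj; rewrite ffunE extend1_up val_insubd val_up ltn_ord.
Qed.

Lemma extend_inj t : injective (extend t).
Proof.
move=> x y E.
have := congr1 (fun u : cmap n.+1 => u.1 ord_max) E.
have := congr1 (fun u : cmap n.+1 => u.2 ord_max) E.
rewrite /= !extend1_max !extend2_max.
case: x y {E} => [c|i] [d|j] //= col root.
- by rewrite col.
- by move: (neq_lift ord_max j); rewrite -root eqxx.
- by move: (neq_lift ord_max i); rewrite root eqxx.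
- by rewrite (lift_inj root).
Qed.

Lemma last_choice_admissible t :
  is_cmap t -> admissible (restrict t) (last_choice t).
Proof.
move=> Vt; have /is_cmapP V := Vt; rewrite /last_choice.
case: unliftP => [j Ej|//]; apply/eqP/(@lift_inj _ ord_max).
by rewrite restrict1_up // -Ej; case: (V ord_max).
Qed.

Lemma extend_restrict t : is_cmap t -> extend (restrict t) (last_choice t) = t.
Proof.
move=> Vt; have /is_cmapP V := Vt.
apply: cmap_eq => i; case: (unliftP ord_max i) => [k ->|->].
- by rewrite extend1_up restrict1_up.
- by rewrite extend1_max /last_choice; case: unliftP.
- by rewrite extend2_up restrict2E.
rewrite extend2_max /last_choice; case: unliftP => [j Ej|//].
by rewrite restrict2E -Ej; case: (V ord_max).
Qed.

Lemma nroots_extend t x : is_cmap t -> admissible t x ->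
  nroots (extend t x).1 = nroots t.1 + (if x is inl _ then 1 else 0).
Proof.
move=> Vt adm; rewrite (nroots_restrict (extend_cmap Vt adm)) restrict_extend.
rewrite extend1_max; case: x {adm} => [c|j] /=; first by rewrite eqxx.
by rewrite eq_sym (negbTE (neq_lift _ _)).
Qed.

Lemma card_restrict_fiber k (t : cmap n) : is_cmap t ->
  #|[set u in cmaps n.+1 k | restrict u == t]| =
    (nroots t.1 + 1 == k) * 2 + (nroots t.1 == k) * nroots t.1.
Proof.
move=> Vt.
have -> : [set u in cmaps n.+1 k | restrict u == t] = extend t @:
    [set x | admissible t x && (nroots t.1 + (if x is inl _ then 1 else 0) == k)].
  apply/setP => u; rewrite !inE; apply/idP/imsetP.
    case/andP=> /andP[Vu Nu] /eqP Ru; exists (last_choice u).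
      have adm := last_choice_admissible Vu.
      by rewrite inE -Ru adm -(nroots_extend (restrict_cmap Vu) adm) (extend_restrict Vu).
    by rewrite -Ru (extend_restrict Vu).
  case=> x; rewrite inE => /andP[adm Nx] ->.
  by rewrite extend_cmap //= nroots_extend // Nx restrict_extend eqxx.
rewrite card_imset; last exact: extend_inj.
rewrite -sum1dep_card big_sumType /= !sum1dep_card addn0.
congr (_ + _); case: eqP => _ /=; rewrite ?mul1n ?mul0n.
- by rewrite -[RHS](card_ord 2); apply: eq_card => c; rewrite inE.
- by apply: eq_card0 => c; rewrite inE.
- by apply: eq_card => j; rewrite !inE andbT.
- by apply: eq_card0 => j; rewrite inE andbF.
Qed.

End RemoveLast.

Lemma card_cmapsS n k :
  #|cmaps n.+1 k| = (if k is k'.+1 then 2 * #|cmaps n k'| else 0) + k * #|cmaps n k|.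
Proof.
rewrite -sum1_card (partition_big (@restrict n) (@is_cmap n)) /=; last first.
  by move=> t; rewrite inE => /andP[/restrict_cmap].
transitivity (\sum_(t : cmap n | is_cmap t)
                ((nroots t.1 + 1 == k) * 2 + (nroots t.1 == k) * k)).
  apply: eq_bigr => t Vt; rewrite sum1dep_card.
  have -> : [set u | (u \in cmaps n.+1 k) && (restrict u == t)] =
            [set u in cmaps n.+1 k | restrict u == t] by apply/setP => u; rewrite !inE.
  by rewrite card_restrict_fiber //; congr (_ + _); case: eqP => [->|].
rewrite big_split /= -!big_distrl /= !sum_nat_bool mulnC [k * _]mulnC.
congr (_ + _).
case: k => [|k]; last by congr (_ * _); apply: eq_card => t; rewrite !inE addn1.
by rewrite eq_card0 // => t; rewrite inE addn1 andbF.
Qed.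

Lemma card_cmaps0 k : #|cmaps 0 k| = (k == 0).
Proof.
have V (t : cmap 0) : is_cmap t by apply/forallP => -[].
have N (t : cmap 0) : nroots t.1 = 0 by apply: eq_card0 => -[].
case: k => [|k]; last by apply: eq_card0 => t; rewrite !inE N andbF.
rewrite (eq_card (B := predT)); last by move=> t; rewrite !inE V N.
by rewrite cardT -cardE card_prod !card_ffun !card_ord.
Qed.

Lemma card_cmaps n k : #|cmaps n k| = 2 ^ k * stirling2 n k.
Proof.
elim: n k => [|n IH] [|k]; rewrite ?card_cmaps0 ?card_cmapsS ?muln0 //.
rewrite /= !IH expnS; nia.
Qed.

Lemma card_is_cmap n :
  #|[set t : cmap n | is_cmap t]| = \sum_(0 <= k < n.+1) 2 ^ k * stirling2 n k.
Proof.
under eq_bigr => k _ do rewrite -card_cmaps.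
transitivity (\sum_(0 <= k < n.+1) \sum_(t : cmap n | is_cmap t) (nroots t.1 == k : nat)).
  rewrite exchange_big /= -sum1dep_card; apply: eq_bigr => t _.
  by rewrite sum_nat_eq_lt ltnS /nroots (leq_trans (max_card _)) ?card_ord.
by apply: eq_bigr => k _; rewrite sum_nat_bool; apply: eq_card => t; rewrite !inE.
Qed.

Lemma same_block_sym n (P : {set {set 'I_n}}) i j :
  same_block P i j = same_block P j i.
Proof.
by apply/existsP/existsP => -[B /andP[PB /andP[iB jB]]]; exists B; rewrite PB iB jB.
Qed.

Lemma avoiders_monochromatic n (s : colored_partition n) : s \in avoiders n ->
  forall i j, same_block s.1 i j -> s.2 i = s.2 j.
Proof.
rewrite inE => /and3P[_ N12 N21].
have mono (i j : 'I_n) : i < j -> same_block s.1 i j -> s.2 i = s.2 j.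
  move=> lt sb; apply/eqP; apply: contraT => ne.
  have two_colors (c d : 'I_2) : c != d ->
      (c == color1) && (d == color2) || (c == color2) && (d == color1).
    by case: c d => [[|[|?]] ?] [[|[|?]] ?].
  case/orP: (two_colors _ _ ne) => /andP[ci cj].
    by case/negP: N12; apply/existsP; exists i; apply/existsP; exists j; apply/and4P.
  by case/negP: N21; apply/existsP; exists i; apply/existsP; exists j; apply/and4P.
move=> i j sb; case: (ltngtP i j) => [lt|gt|/val_inj-> //]; first exact: mono.
by rewrite (mono j i) // same_block_sym.
Qed.

Definition partition_of n (t : cmap n) : colored_partition n :=
  (preim_partition t.1 [set: 'I_n], t.2).

Lemma same_block_preim n (r : {ffun 'I_n -> 'I_n}) i j :
  same_block (preim_partition r [set: 'I_n]) i j = (r i == r j).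
Proof.
have partP := preim_partitionP r [set: 'I_n].
have cP := cover_partition partP; have [_ tI _] := and3P partP.
have eqR : {in [set: 'I_n] & &, equivalence_rel (fun x y => r x == r y)}.
  by split=> // /eqP->.
rewrite -(pblock_equivalence_partition eqR) ?inE //.
apply/existsP/idP => [[B /andP[PB /andP[iB jB]]]|jPi].
  by rewrite (def_pblock tI PB iB).
by exists (pblock (preim_partition r [set: 'I_n]) i); rewrite pblock_mem ?mem_pblock cP ?inE.
Qed.

Lemma partition_of_avoider n (t : cmap n) : is_cmap t -> partition_of t \in avoiders n.
Proof.
move=> /is_cmapP V; rewrite inE /is_colored_partition preim_partitionP /=.
have mono (i j : 'I_n) : t.1 i = t.1 j -> t.2 i = t.2 j.
  by case: (V i) => _ _ ->; case: (V j) => _ _ -> ->.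
by apply/andP; split; apply/negP => /existsP[i /existsP[j /and4P[_]]];
  rewrite same_block_preim => /eqP/mono-> /eqP->.
Qed.

Lemma partition_of_inj n : {in [set t : cmap n | is_cmap t] &, injective (@partition_of n)}.
Proof.
move=> t u; rewrite !inE => /is_cmapP Vt /is_cmapP Vu [Ep Ec].
have S i j : (t.1 i == t.1 j) = (u.1 i == u.1 j) by rewrite -!same_block_preim Ep.
apply: cmap_eq => i; last by rewrite Ec.
(* [t.1 i] and [u.1 i] both lie in the block of [i], and each root is below
   every element of its block *)
have ut : u.1 i = u.1 (t.1 i) by apply/eqP; rewrite -S; case: (Vt i) => _ ->.
have tu : t.1 i = t.1 (u.1 i) by apply/eqP; rewrite S; case: (Vu i) => _ ->.
apply: val_inj; apply/eqP; rewrite eqn_leq; apply/andP; split.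
- by rewrite {1}tu; case: (Vt (u.1 i)).
- by rewrite {1}ut; case: (Vu (t.1 i)).
Qed.

Definition block_min n (B : {set 'I_n}) (i0 : 'I_n) := [arg min_(j < i0 in B) val j].

Lemma block_minP n (B : {set 'I_n}) i0 : i0 \in B ->
  block_min B i0 \in B /\ forall j, j \in B -> block_min B i0 <= j.
Proof. by move=> Bi0; rewrite /block_min; case: arg_minnP. Qed.

Lemma block_min_eq n (B : {set 'I_n}) i0 i1 :
  i0 \in B -> i1 \in B -> block_min B i0 = block_min B i1.
Proof.
move=> /block_minP[B0 m0] /block_minP[B1 m1].
by apply: val_inj; apply/eqP; rewrite eqn_leq m0 ?m1.
Qed.

Lemma partition_of_surj n (s : colored_partition n) : s \in avoiders n ->
  exists2 t, is_cmap t & partition_of t = s.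
Proof.
move=> sA; have := avoiders_monochromatic sA; move: sA.
case: s => P c; rewrite inE /is_colored_partition /= => /and3P[partP _ _] mono.
have cP := cover_partition partP; have [_ tI _] := and3P partP.
have iPi i : i \in pblock P i by rewrite mem_pblock cP inE.
pose r := [ffun i => block_min (pblock P i) i].
have rPi i : r i \in pblock P i by rewrite ffunE; case: (block_minP (iPi i)).
have Pr i : pblock P (r i) = pblock P i by apply: same_pblock.
have r_eq x y : (r x == r y) = (pblock P x == pblock P y).
  apply/eqP/eqP => [E|E]; first by rewrite -Pr E Pr.
  by rewrite !ffunE E; apply: block_min_eq; [rewrite -E|]; apply: iPi.
exists (r, c).
  apply/is_cmapP => i /=; split.
  - by rewrite ffunE; case: (block_minP (iPi i)) => _ ->.
  - by apply/eqP; rewrite r_eq Pr.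
  - apply: mono; apply/existsP; exists (pblock P i).
    by rewrite pblock_mem ?cP ?inE //= iPi rPi.
congr (_, _); rewrite -[RHS](preim_partition_pblock partP).
by apply: eq_imset => x; apply/setP => y; rewrite !inE r_eq.
Qed.

Theorem mainTheorem9 (n : nat) : 1 <= n ->
  #|avoiders n| = \sum_(0 <= k < n.+1) 2 ^ k * stirling2 n k.
Proof.
move=> _; rewrite -card_is_cmap -(card_in_imset (@partition_of_inj n)).
apply: eq_card => s; apply/idP/imsetP.
  by case/partition_of_surj => t Vt <-; exists t; rewrite ?inE.
by case=> t; rewrite inE => Vt ->; apply: partition_of_avoider.
Qed.
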